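(* For every model $M$ of a frame-logic signature there is a unique frame model over the same universes with the same interpretation of the constants, the function symbols, and the non-inductive relations (those in $\mathcal R$).
   Context: Frame logic (FL). Fix a multi-sorted signature with a finite set $S$ of sorts containing a designated foreground sort $\sigma_{\mathsf f}$ and a background sort $\sigma_{\mathsf{S(f)}}$, constants $C$, function symbols $F$, and disjoint sets of relation symbols $\mathcal R$ (ordinary) and $\mathcal I$ (inductively defined). The universe of $\sigma_{\mathsf{S(f)}}$ is the powerset of the universe of $\sigma_{\mathsf f}$; the only symbols involving $\sigma_{\mathsf{S(f)}}$ are $\in,\cup,\cap$, complement, $\emptyset$ with standard meanings. A subset $F_{\mathsf m}\subseteq F$ is declared mutable, each having an argument of sort $\sigma_{\mathsf f}$. Syntax. Guards: $\gamma ::= t=t \mid R(\bar t)\ (R\in\mathcal R) \mid \gamma\wedge\gamma\mid\neg\gamma\mid \mathit{ite}(\gamma:\gamma,\gamma)\mid \exists y:\gamma.\,\gamma$, with no terms of sort $\sigma_{\mathsf{S(f)}}$. Formulas: $\varphi ::= t=t\mid R(\bar t)\ (R\in\mathcal R\cup\mathcal I)\mid \varphi\wedge\varphi\mid\neg\varphi\mid\mathit{ite}(\gamma:\varphi,\varphi)\mid\exists y:\gamma.\,\varphi$. Terms: $t::= c\mid x\mid f(t_1,\dots,t_m)\mid \mathit{ite}(\gamma:t,t)\mid \mathit{Sp}(\varphi)\mid\mathit{Sp}(t)$ (support expressions, of sort $\sigma_{\mathsf{S(f)}}$). Each $R\in\mathcal I$ has a definition $R(\bar x):=\rho_R(\bar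 x)$ with no argument of sort $\sigma_{\mathsf{S(f)}}$, where relations of $\mathcal I$ occur in $\rho_R$ only under an even number of negations or inside support expressions. Models: a model gives universes, interprets constants, functions, relations in $\mathcal R\cup\mathcal I$, and maps each support expression to a function from variable assignments to sets of foreground elements; $\mathit{ite}(\gamma:\alpha,\beta)$ means $(\gamma\wedge\alpha)\vee(\neg\gamma\wedge\beta)$ and $\exists y:\gamma.\varphi$ means $\exists y.(\gamma\wedge\varphi)$. Support equations: $\mathit{Sp}(c)=\mathit{Sp}(x)=\emptyset$; $[\![\mathit{Sp}(f(t_1..t_n))]\!](\nu)=\bigcup_{i:\,t_i\text{ of sort }\sigma_{\mathsf f}}\{[\![t_i]\!]_{M,\nu}\}\cup\bigcup_i[\![\mathit{Sp}(t_i)]\!](\nu)$ if $f\in F_{\mathsf m}$, else $\bigcup_i[\![\mathit{Sp}(t_i)]\!](\nu)$; $\mathit{Sp}(\mathit{Sp}(\cdot))=\mathit{Sp}(\cdot)$; $\mathit{Sp}(t_1=t_2)=\mathit{Sp}(t_1)\cup\mathit{Sp}(t_2)$; $\mathit{Sp}(R(\bar t))=\bigcup_i\mathit{Sp}(t_i)$ for $R\in\mathcal R$; for $R\in\mathcal I$, $[\![\mathit{Sp}(R(\bar t))]\!](\nu)=[\![\mathit{Sp}(\rho_R(\bar x))]\!](\nu[\bar x\leftarrow[\![\bar t]\!]_{M,\nu}])\cup\bigcup_i[\![\mathit{Sp}(t_i)]\!](\nu)$; $\mathit{Sp}(\alpha\wedge\beta)=\mathit{Sp}(\alpha)\cup\mathit{Sp}(\beta)$;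 $\mathit{Sp}(\neg\varphi)=\mathit{Sp}(\varphi)$; $\mathit{Sp}(\mathit{ite}(\gamma:\alpha,\beta))$ is $\mathit{Sp}(\gamma)\cup\mathit{Sp}(\alpha)$ where $\gamma$ holds and $\mathit{Sp}(\gamma)\cup\mathit{Sp}(\beta)$ otherwise (likewise for term $\mathit{ite}$); $[\![\mathit{Sp}(\exists y:\gamma.\varphi)]\!](\nu)=\bigcup_{u}[\![\mathit{Sp}(\gamma)]\!](\nu[y\leftarrow u])\cup\bigcup_{u:\,M,\nu[y\leftarrow u]\models\gamma}[\![\mathit{Sp}(\varphi)]\!](\nu[y\leftarrow u])$. Inductive equations: $[\![R(\bar x)]\!]=[\![\rho_R(\bar x)]\!]$ for $R\in\mathcal I$. Frame model: a model $M$ that satisfies the support and inductive equations such that (1) no model with the same universes, constants, functions and $\mathcal R$-relations whose support interpretations are pointwise contained in those of $M$ with at least one strict containment satisfies the support equations, and (2) no model with the same universes, constants, functions, $\mathcal R$-relations and support interpretations whose inductive relations are contained in those of $M$ with at least one strictly smaller satisfies the inductive equations. *)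

From mathcomp Require Import all_boot.
From Stdlib Require Import ClassicalDescription.

Set Implicit Arguments.
Unset Strict Implicit.
Unset Printing Implicit Defensive.

(* Signatures.  [bsort] is the finite set of all sorts OTHER than the
   background sort sigma_S(f); it contains the foreground sort [fg].
   The full set of sorts is [option bsort], with [None] = sigma_S(f).
   Constants, function symbols and relation symbols (ordinary and
   inductive) only involve sorts of [bsort]; the symbols involving
   sigma_S(f) (membership, union, intersection, complement, emptyset)
   are built into the syntax below.                                    *)
Record signature := Signature {
  bsort : finType;
  fg : bsort;
  Csym : Type;
  csort : Csym -> bsort;
  Fsym : Type;
  fargs : Fsym -> seq bsort;
  fres : Fsym -> bsort;
  fmut : Fsym -> Prop;
  fmut_fg : forall f, fmut f -> fg \in fargs f;
  Rsym : Type;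
  rargs : Rsym -> seq bsort;
  Isym : Type;
  iargs : Isym -> seq bsort
}.

Section FL.
Variable S : signature.

Notation sort := (option (bsort S)).
Notation nthS ss i := (nth (fg S) ss i).

(* The boolean index [g] is [true] for guards and [false] for
   general terms / formulas.  Guards cannot contain terms of sort
   sigma_S(f) (hence no support expressions, no membership, no set
   operations, no set variables) nor inductive relations.             *)
Inductive term : bool -> sort -> Type :=
| TVar g (b : bsort S) (n : nat) : term g (Some b)
| TSVar (n : nat) : term false None
| TConst g (c : Csym S) : term g (Some (csort c))
| TApp g (f : Fsym S)
    (ts : forall i : 'I_(size (fargs f)), term g (Some (nthS (fargs f) i)))
    : term g (Some (fres f))
| TIte g s (gam : formula true) (t1 t2 : term g s) : term g s
| TSpF (phi : formula false) : term false None
| TSpT s (t : term false s) : term false None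
| TEmpty : term false None
| TUnion (A B : term false None) : term false None
| TInter (A B : term false None) : term false None
| TCompl (A : term false None) : term false None
with formula : bool -> Type :=
| FEq g s (t1 t2 : term g s) : formula g
| FRel g (r : Rsym S)
    (ts : forall i : 'I_(size (rargs r)), term g (Some (nthS (rargs r) i)))
    : formula g
| FRelI (r : Isym S)
    (ts : forall i : 'I_(size (iargs r)), term false (Some (nthS (iargs r) i)))
    : formula false
| FMem (t : term false (Some (fg S))) (A : term false None) : formula false
| FAnd g (phi psi : formula g) : formula g
| FNot g (phi : formula g) : formula g
| FIte g (gam : formula true) (phi psi : formula g) : formula g
| FEx g (s : sort) (n : nat) (gam : formula true) (phi : formula g) : formula g.

Fixpoint relaxT g s (t : term g s) : term false s :=
  match t in term _ s return term false s with
  | TVar _ b n => @TVar false b n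
  | TSVar n => TSVar n
  | TConst _ c => @TConst false c
  | TApp _ f ts => @TApp false f (fun i => relaxT (ts i))
  | TIte _ _ gam t1 t2 => @TIte false _ gam (relaxT t1) (relaxT t2)
  | TSpF phi => TSpF phi
  | TSpT _ t => TSpT t
  | TEmpty => TEmpty
  | TUnion A B => TUnion A B
  | TInter A B => TInter A B
  | TCompl A => TCompl A
  end
with relaxF g (phi : formula g) : formula false :=
  match phi with
  | FEq _ _ t1 t2 => @FEq false _ (relaxT t1) (relaxT t2)
  | FRel _ r ts => @FRel false r (fun i => relaxT (ts i))
  | FRelI r ts => FRelI ts
  | FMem t A => FMem t A
  | FAnd _ a b => @FAnd false (relaxF a) (relaxF b)
  | FNot _ a => @FNot false (relaxF a)
  | FIte _ gam a b => @FIte false gam (relaxF a) (relaxF b)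
  | FEx _ s n gam a => @FEx false s n gam (relaxF a)
  end.

Fixpoint occT g s0 (t : term g s0) (s : sort) (n : nat) : Prop :=
  match t with
  | TVar _ b m => s = Some b /\ n = m
  | TSVar m => s = None /\ n = m
  | TConst _ _ => False
  | TApp _ f ts => exists i, occT (ts i) s n
  | TIte _ _ gam t1 t2 => occF gam s n \/ occT t1 s n \/ occT t2 s n
  | TSpF phi => occF phi s n
  | TSpT _ t => occT t s n
  | TEmpty => False
  | TUnion A B => occT A s n \/ occT B s n
  | TInter A B => occT A s n \/ occT B s n
  | TCompl A => occT A s n
  end
with occF g (phi : formula g) (s : sort) (n : nat) : Prop :=
  match phi with
  | FEq _ _ t1 t2 => occT t1 s n \/ occT t2 s n
  | FRel _ r ts => exists i, occT (ts i) s n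
  | FRelI r ts => exists i, occT (ts i) s n
  | FMem t A => occT t s n \/ occT A s n
  | FAnd _ a b => occF a s n \/ occF b s n
  | FNot _ a => occF a s n
  | FIte _ gam a b => occF gam s n \/ occF a s n \/ occF b s n
  | FEx _ s' m gam a => (occF gam s n \/ occF a s n) /\ ~ (s = s' /\ n = m)
  end.

(* The definition rho_R(xbar) of an inductive relation R : its formal
   parameters xbar are the variables  x_i = (i, sort of the i-th argument),
   and rho_R has no other free variables. *)
Definition def_closed (r : Isym S) (rho : formula false) : Prop :=
  forall s n, occF rho s n ->
    exists i : 'I_(size (iargs r)), s = Some (nthS (iargs r) i) /\ n = i.

(* Inductive relations occur only under an even number of negations, or
   inside support expressions ([p] = current polarity, true = even).
   Terms can contain formulas only inside support expressions or guards
   (guards contain no inductive relation), so terms impose no constraint. *)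
Fixpoint polarity_ok (p : bool) g (phi : formula g) : Prop :=
  match phi with
  | FEq _ _ _ _ => True
  | FRel _ _ _ => True
  | FRelI _ _ => p = true
  | FMem _ _ => True
  | FAnd _ a b => polarity_ok p a /\ polarity_ok p b
  | FNot _ a => polarity_ok (~~ p) a
  | FIte _ _ a b => polarity_ok p a /\ polarity_ok p b
  | FEx _ _ _ _ a => polarity_ok p a
  end.

(* The part of a model that is fixed: universes, constants, functions,
   and ordinary relations. *)
Record structure := Structure {
  univ : bsort S -> Type;
  cI : forall c : Csym S, univ (csort c);
  fI : forall f : Fsym S,
        (forall i : 'I_(size (fargs f)), univ (nthS (fargs f) i)) -> univ (fres f);
  rI : forall r : Rsym S,
        (forall i : 'I_(size (rargs r)), univ (nthS (rargs r) i)) -> Prop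
}.

Definition carrier (U : bsort S -> Type) (s : sort) : Type :=
  match s with Some b => U b | None => U (fg S) -> Prop end.

Definition asg (U : bsort S -> Type) := forall s : sort, nat -> carrier U s.

Definition upd U (nu : asg U) (s : sort) (n : nat) (v : carrier U s) : asg U :=
  fun s' n' =>
    if n' == n then
      match s' =P s with
      | ReflectT e => eq_rect_r (carrier U) v e
      | ReflectF _ => nu s' n'
      end
    else nu s' n'.

Definition params_upd U (nu : asg U) (ss : seq (bsort S))
    (a : forall i : 'I_(size ss), U (nthS ss i)) : asg U :=
  fun s n =>
    match (insub n : option 'I_(size ss)) with
    | Some i =>
        match s =P Some (nthS ss i) with
        | ReflectT e => eq_rect_r (carrier U) (a i : carrier U (Some (nthS ss i))) e
        | ReflectF _ => nu s n
        end
    | None => nu s n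
    end.

Record model := Model {
  mbase : structure;
  suppF : formula false -> asg (univ mbase) -> univ mbase (fg S) -> Prop;
  suppT : forall s, term false s -> asg (univ mbase) -> univ mbase (fg S) -> Prop;
  indI : forall r : Isym S,
        (forall i : 'I_(size (iargs r)), univ mbase (nthS (iargs r) i)) -> Prop
}.

Section Eval.
Variable M : model.
Let U := univ (mbase M).

Fixpoint eval g s (t : term g s) (nu : asg U) : carrier U s :=
  match t in term _ s return carrier U s with
  | TVar _ b n => nu (Some b) n
  | TSVar n => nu None n
  | TConst _ c => @cI (mbase M) c
  | TApp _ f ts => @fI (mbase M) f (fun i => eval (ts i) nu)
  | TIte _ _ gam t1 t2 =>
      if excluded_middle_informative (sat gam nu) then eval t1 nu else eval t2 nu
  | TSpF phi => @suppF M phi nu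
  | TSpT _ t => @suppT M _ t nu
  | TEmpty => fun _ => False
  | TUnion A B => fun u => eval A nu u \/ eval B nu u
  | TInter A B => fun u => eval A nu u /\ eval B nu u
  | TCompl A => fun u => ~ eval A nu u
  end
with sat g (phi : formula g) (nu : asg U) : Prop :=
  match phi with
  | FEq _ _ t1 t2 => eval t1 nu = eval t2 nu
  | FRel _ r ts => @rI (mbase M) r (fun i => eval (ts i) nu)
  | FRelI r ts => @indI M r (fun i => eval (ts i) nu)
  | FMem t A => eval A nu (eval t nu)
  | FAnd _ a b => sat a nu /\ sat b nu
  | FNot _ a => ~ sat a nu
  | FIte _ gam a b => (sat gam nu /\ sat a nu) \/ (~ sat gam nu /\ sat b nu)
  | FEx _ s n gam a => exists v : carrier U s, sat gam (upd nu n v) /\ sat a (upd nu n v)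
  end.

(* {[[t]]} if t has the foreground sort, empty otherwise *)
Definition as_fg (b : bsort S) (v : U b) : U (fg S) -> Prop :=
  fun u => exists e : b = fg S, eq_rect b U v (fg S) e = u.

Variable rho : forall r : Isym S, formula false.

(* Right-hand sides of the support equations (one unfolding step). *)
Definition rhsT g s (t : term g s) (nu : asg U) : U (fg S) -> Prop :=
  match t with
  | TVar _ _ _ => fun _ => False
  | TSVar _ => fun _ => False
  | TConst _ _ => fun _ => False
  | TApp _ f ts => fun u =>
      (fmut f /\ exists i, as_fg (eval (ts i) nu) u)
      \/ exists i, @suppT M _ (relaxT (ts i)) nu u
  | TIte _ _ gam t1 t2 => fun u =>
      @suppF M (relaxF gam) nu u \/
      (if excluded_middle_informative (sat gam nu)
       then @suppT M _ (relaxT t1) nu u else @suppT M _ (relaxT t2) nu u)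
  | TSpF phi => @suppF M phi nu
  | TSpT _ t => @suppT M _ t nu
  | TEmpty => fun _ => False
  | TUnion A B => fun u => @suppT M _ A nu u \/ @suppT M _ B nu u
  | TInter A B => fun u => @suppT M _ A nu u \/ @suppT M _ B nu u
  | TCompl A => @suppT M _ A nu
  end.

Definition rhsF g (phi : formula g) (nu : asg U) : U (fg S) -> Prop :=
  match phi with
  | FEq _ _ t1 t2 => fun u => @suppT M _ (relaxT t1) nu u \/ @suppT M _ (relaxT t2) nu u
  | FRel _ r ts => fun u => exists i, @suppT M _ (relaxT (ts i)) nu u
  | FRelI r ts => fun u =>
      @suppF M (rho r) (params_upd nu (fun i => eval (ts i) nu)) u
      \/ exists i, @suppT M _ (ts i) nu u
  | FMem t A => fun u => @suppT M _ t nu u \/ @suppT M _ A nu u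
  | FAnd _ a b => fun u => @suppF M (relaxF a) nu u \/ @suppF M (relaxF b) nu u
  | FNot _ a => @suppF M (relaxF a) nu
  | FIte _ gam a b => fun u =>
      @suppF M (relaxF gam) nu u \/
      (if excluded_middle_informative (sat gam nu)
       then @suppF M (relaxF a) nu u else @suppF M (relaxF b) nu u)
  | FEx _ s n gam a => fun u =>
      (exists v : carrier U s, @suppF M (relaxF gam) (upd nu n v) u)
      \/ (exists v : carrier U s,
            sat gam (upd nu n v) /\ @suppF M (relaxF a) (upd nu n v) u)
  end.

Definition support_eqs : Prop :=
  (forall g (phi : formula g) nu u, @suppF M (relaxF phi) nu u <-> rhsF phi nu u) /\
  (forall g s (t : term g s) nu u, @suppT M _ (relaxT t) nu u <-> rhsT t nu u).

Definition inductive_eqs : Prop :=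
  forall (r : Isym S) (nu : asg U),
    sat (@FRelI r (fun i : 'I_(size (iargs r)) => @TVar false (nthS (iargs r) i) i)) nu
    <-> sat (rho r) nu.

End Eval.

Definition frame_model (rho : forall r : Isym S, formula false) (M : model) : Prop :=
  support_eqs M rho /\ inductive_eqs M rho /\
  (forall sF' sT' ind',
     (forall phi nu u, sF' phi nu u -> @suppF M phi nu u) ->
     (forall s t nu u, sT' s t nu u -> @suppT M _ t nu u) ->
     ((exists phi nu u, @suppF M phi nu u /\ ~ sF' phi nu u) \/
      (exists s t nu u, @suppT M _ t nu u /\ ~ sT' s t nu u)) ->
     ~ support_eqs (@Model (mbase M) sF' sT' ind') rho) /\
  (forall ind',
     (forall r a, ind' r a -> @indI M r a) ->
     (exists r a, @indI M r a /\ ~ ind' r a) ->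
     ~ inductive_eqs (@Model (mbase M) (@suppF M) (@suppT M) ind') rho).

End FL.

From mathcomp Require Import all_boot.
From Stdlib Require Import ClassicalDescription FunctionalExtensionality.
From Stdlib Require Import PropExtensionality Classical.

(* Fix the structure B of M.  The support equations are the fixed-point equations of
   an operator on support interpretations that is monotone, because the only syntax
   its right-hand sides evaluate, guards and foreground terms, contains neither
   support expressions nor inductive relations.  The least fixed point, i.e. the
   intersection of all interpretations closed under the right-hand sides, satisfies
   the support equations; likewise, as inductive relations occur positively in their
   definitions, the least relations closed under the definitions satisfy the inductive
   equations.  Together they form a frame model, and any frame model over B solves
   both systems, hence contains these least solutions and, by its two minimality
   conditions, equals them.  Since the inductive equations must hold for every
   assignment, one also needs that the least supports depend only on free variables:
   the part of the least fixed point that is invariant under changing the other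
   variables is closed, hence is all of it. *)

Set Implicit Arguments.
Unset Strict Implicit.
Unset Printing Implicit Defensive.

Scheme term_mind := Induction for term Sort Prop
  with formula_mind := Induction for formula Sort Prop.
Combined Scheme term_formula_mind from term_mind, formula_mind.

Lemma if_informative_congr (P Q : Prop) T (a b c d : T) :
  (P <-> Q) -> a = c -> b = d ->
  (if excluded_middle_informative P then a else b) =
  (if excluded_middle_informative Q then c else d).
Proof.
move=> PQ -> ->.
by case: excluded_middle_informative => p; case: excluded_middle_informative => q //;
  exfalso; tauto.
Qed.

Section Relax.
Variable S : signature.

Lemma relax_idem :
  (forall g s (t : term (S:=S) g s), relaxT (relaxT t) = relaxT t) /\
  (forall g (phi : formula S g), relaxF (relaxF phi) = relaxF phi).
Proof.
apply: term_formula_mind => //= *; try congruence.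
all: by f_equal; apply: functional_extensionality_dep.
Qed.

Lemma occ_relax :
  (forall g s0 (t : term (S:=S) g s0) s n, occT (relaxT t) s n <-> occT t s n) /\
  (forall g (phi : formula S g) s n, occF (relaxF phi) s n <-> occF phi s n).
Proof.
apply: term_formula_mind => //=; intros; try tauto.
all: try by split=> -[i Hi]; exists i; apply/H.
all: rewrite ?H ?H0 ?H1; tauto.
Qed.

Lemma occT_relax g s0 (t : term (S:=S) g s0) s n : occT (relaxT t) s n <-> occT t s n.
Proof. exact: occ_relax.1. Qed.

Lemma occF_relax g (phi : formula S g) s n : occF (relaxF phi) s n <-> occF phi s n.
Proof. exact: occ_relax.2. Qed.

Lemma eval_relax (M : model S) :
  (forall g s (t : term (S:=S) g s) nu, eval (M:=M) (relaxT t) nu = eval t nu) /\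
  (forall g (phi : formula S g) nu, sat (M:=M) (relaxF phi) nu <-> sat phi nu).
Proof.
apply: term_formula_mind => //=; intros; rewrite ?H ?H0 ?H1 //; try tauto.
- by congr (fI _); apply: functional_extensionality_dep.
- have -> // : (fun i => eval (M:=M) (relaxT (ts i)) nu) = (fun i => eval (ts i) nu).
  by apply: functional_extensionality_dep => i; apply: H.
- by split=> -[v [h1 h2]]; exists v; split => //; apply/H0.
Qed.

End Relax.

Section Assignments.
Variables (S : signature) (U : bsort S -> Type).
Notation sort := (option (bsort S)).

Definition agree_on (P : sort -> nat -> Prop) (nu nu' : asg U) :=
  forall s n, P s n -> nu s n = nu' s n.

Lemma agree_on_sub (P Q : sort -> nat -> Prop) nu nu' :
  agree_on Q nu nu' -> (forall s n, P s n -> Q s n) -> agree_on P nu nu'.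
Proof. by move=> E PQ s n /PQ; apply: E. Qed.

Lemma agree_on_refl P nu : agree_on P nu nu.
Proof. by []. Qed.

Lemma agree_on_sym P nu nu' : agree_on P nu nu' -> agree_on P nu' nu.
Proof. by move=> E s n /E. Qed.

Lemma agree_on_upd P Q s' m (v : carrier U s') nu nu' :
  agree_on (fun s n => Q s n /\ ~ (s = s' /\ n = m)) nu nu' ->
  (forall s n, P s n -> Q s n) ->
  agree_on P (upd nu m v) (upd nu' m v).
Proof.
move=> E PQ s n /PQ Qn; rewrite /upd; case: ifP => [/eqP En|/eqP nEn].
  by case: eqP => // Es; apply: E; split=> // -[].
by apply: E; split=> // -[].
Qed.

Lemma params_upd_nth nu ss (a : forall i : 'I_(size ss), U (nth (fg S) ss i))
    (i : 'I_(size ss)) :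
  params_upd nu a (Some (nth (fg S) ss i)) i = a i.
Proof. by rewrite /params_upd valK; case: eqP => // e; rewrite eq_axiomK. Qed.

Lemma def_closed_agree r phi (nu nu' : asg U) : def_closed r phi ->
  (forall i : 'I_(size (iargs r)),
     nu (Some (nth (fg S) (iargs r) i)) i = nu' (Some (nth (fg S) (iargs r) i)) i) ->
  agree_on (occF phi) nu nu'.
Proof. by move=> cl E s n /cl [i [-> ->]]. Qed.

End Assignments.

Ltac agree_sub E :=
  apply: (agree_on_sub E) => ? ? /=; rewrite ?occF_relax ?occT_relax; tauto.

Section Evaluation.
Variable S : signature.
Variable B : structure S.
Notation U := (univ B).
Notation mk sF sT ind := (@Model S B sF sT ind).

Definition fsupp := formula S false -> asg U -> U (fg S) -> Prop.
Definition tsupp := forall s, term (S:=S) false s -> asg U -> U (fg S) -> Prop.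
Definition irel :=
  forall r : Isym S, (forall i : 'I_(size (iargs r)), U (nth (fg S) (iargs r) i)) -> Prop.

Lemma fsupp_ext (sF1 sF2 : fsupp) :
  (forall phi nu u, sF1 phi nu u <-> sF2 phi nu u) -> sF1 = sF2.
Proof.
move=> E; do 3!apply: functional_extensionality => ?.
exact/propositional_extensionality/E.
Qed.

Lemma tsupp_ext (sT1 sT2 : tsupp) :
  (forall s t nu u, sT1 s t nu u <-> sT2 s t nu u) -> sT1 = sT2.
Proof.
move=> E; apply: functional_extensionality_dep => s.
do 3!apply: functional_extensionality => ?.
exact/propositional_extensionality/E.
Qed.

Lemma irel_ext (i1 i2 : irel) : (forall r a, i1 r a <-> i2 r a) -> i1 = i2.
Proof.
move=> E; apply: functional_extensionality_dep => r.
apply: functional_extensionality => ?; exact/propositional_extensionality/E.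
Qed.

Definition supp_transfer (sF1 : fsupp) (sT1 : tsupp) (sF2 : fsupp) (sT2 : tsupp) :=
  (forall phi nu nu' u, sF1 phi nu u -> agree_on (occF phi) nu nu' -> sF2 phi nu' u) /\
  (forall s t nu nu' u, sT1 s t nu u -> agree_on (occT t) nu nu' -> sT2 s t nu' u).

Definition supp_local sF sT := supp_transfer sF sT sF sT.

Definition interp_local_eq sF1 sT1 (i1 : irel) sF2 sT2 (i2 : irel) :=
  [/\ supp_transfer sF1 sT1 sF2 sT2, supp_transfer sF2 sT2 sF1 sT1 & i1 = i2].

Lemma interp_local_eq_suppF sF1 sT1 i1 sF2 sT2 i2 phi nu nu' :
  interp_local_eq sF1 sT1 i1 sF2 sT2 i2 -> agree_on (occF phi) nu nu' ->
  sF1 phi nu = sF2 phi nu'.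
Proof.
move=> [[trF _] [trF' _] _] E; apply: functional_extensionality => u.
apply: propositional_extensionality.
by split=> h; [apply: trF h E | apply: trF' h (agree_on_sym E)].
Qed.

Lemma interp_local_eq_suppT sF1 sT1 i1 sF2 sT2 i2 s t nu nu' :
  interp_local_eq sF1 sT1 i1 sF2 sT2 i2 -> agree_on (occT t) nu nu' ->
  sT1 s t nu = sT2 s t nu'.
Proof.
move=> [[_ trT] [_ trT'] _] E; apply: functional_extensionality => u.
apply: propositional_extensionality.
by split=> h; [apply: trT h E | apply: trT' h (agree_on_sym E)].
Qed.

(* Guards and foreground terms contain no support expression and no inductive
   relation, so they evaluate alike in any two models over the same structure. *)
Lemma eval_transfer sF1 sT1 i1 sF2 sT2 i2 :
  (forall g s (t : term g s) nu nu',
     [\/ g = true, s <> None | interp_local_eq sF1 sT1 i1 sF2 sT2 i2] ->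
     agree_on (occT t) nu nu' ->
     eval (M:=mk sF1 sT1 i1) t nu = eval (M:=mk sF2 sT2 i2) t nu') /\
  (forall g (phi : formula S g) nu nu',
     g = true \/ interp_local_eq sF1 sT1 i1 sF2 sT2 i2 ->
     agree_on (occF phi) nu nu' ->
     (sat (M:=mk sF1 sT1 i1) phi nu <-> sat (M:=mk sF2 sT2 i2) phi nu')).
Proof.
apply: term_formula_mind => //=.
- by move=> g b n nu nu' _ E; apply: (E _ _ (conj erefl erefl)).
- by move=> n nu nu' _ E; apply: (E _ _ (conj erefl erefl)).
- move=> g f ts IH nu nu' _ E; congr (fI _); apply: functional_extensionality_dep => i.
  by apply: IH; [constructor 2 | apply: (agree_on_sub E) => ? ? ?; exists i].
- move=> g s gam IHg t1 IH1 t2 IH2 nu nu' h E.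
  by apply: if_informative_congr;
    [apply: IHg (or_introl erefl) _ | apply: IH1 h _ | apply: IH2 h _]; agree_sub E.
- by move=> phi _ nu nu' [//|//|h] E; apply: interp_local_eq_suppF h E.
- by move=> s t _ nu nu' [//|//|h] E; apply: interp_local_eq_suppT h E.
- by move=> A IHA C IHC nu nu' h E; rewrite (IHA nu nu' h) ?(IHC nu nu' h) //; agree_sub E.
- by move=> A IHA C IHC nu nu' h E; rewrite (IHA nu nu' h) ?(IHC nu nu' h) //; agree_sub E.
- by move=> A IHA nu nu' h E; rewrite (IHA nu nu').
- move=> g s t1 IH1 t2 IH2 nu nu' h E.
  have h' : [\/ g = true, s <> None | interp_local_eq sF1 sT1 i1 sF2 sT2 i2].
    by case: h => ?; [apply: Or31 | apply: Or33].
  by rewrite (IH1 nu nu' h') ?(IH2 nu nu' h') //; agree_sub E.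
- move=> g r ts IH nu nu' _ E.
  have -> // : (fun i => eval (M:=mk sF1 sT1 i1) (ts i) nu) =
               (fun i => eval (M:=mk sF2 sT2 i2) (ts i) nu').
  apply: functional_extensionality_dep => i.
  by apply: IH; [constructor 2 | apply: (agree_on_sub E) => ? ? ?; exists i].
- move=> r ts IH nu nu' [//|[_ _ Ei]] E; subst i2.
  have -> // : (fun i => eval (M:=mk sF1 sT1 i1) (ts i) nu) =
               (fun i => eval (M:=mk sF2 sT2 i1) (ts i) nu').
  apply: functional_extensionality_dep => i.
  by apply: IH; [constructor 2 | apply: (agree_on_sub E) => ? ? ?; exists i].
- move=> t IHt A IHA nu nu' [//|h] E.
  by rewrite (IHt nu nu') ?(IHA nu nu' (Or33 _ _ h)) //; by [apply: Or32 | agree_sub E].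
- by move=> g phi IH psi IH' nu nu' h E; rewrite (IH nu nu') ?(IH' nu nu') //; agree_sub E.
- by move=> g phi IH nu nu' h E; rewrite (IH nu nu').
- move=> g gam IHg phi IH psi IH' nu nu' h E.
  by rewrite (IHg nu nu' (or_introl erefl)) ?(IH nu nu' h) ?(IH' nu nu' h) //; agree_sub E.
- move=> g s n gam IHg phi IH nu nu' h E.
  have Eg v := agree_on_upd v E (fun _ _ o => or_introl o).
  have Ephi v := agree_on_upd v E (fun _ _ o => or_intror o).
  split=> -[v [hg hphi]]; exists v.
    by split; [apply/(IHg _ _ (or_introl erefl) (Eg v)) | apply/(IH _ _ h (Ephi v))].
  by split; [apply/(IHg _ _ (or_introl erefl) (Eg v)) | apply/(IH _ _ h (Ephi v))].
Qed.

Lemma guard_sat_local {sF1 sT1 i1 sF2 sT2 i2} (gam : formula S true) nu nu' :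
  agree_on (occF gam) nu nu' ->
  (sat (M:=mk sF1 sT1 i1) gam nu <-> sat (M:=mk sF2 sT2 i2) gam nu').
Proof. exact: (eval_transfer sF1 sT1 i1 sF2 sT2 i2).2 _ gam nu nu' (or_introl erefl). Qed.

Lemma fg_eval_local {sF1 sT1 i1 sF2 sT2 i2} g b (t : term g (Some b)) nu nu' :
  agree_on (occT t) nu nu' ->
  eval (M:=mk sF1 sT1 i1) t nu = eval (M:=mk sF2 sT2 i2) t nu'.
Proof. by apply: (eval_transfer sF1 sT1 i1 sF2 sT2 i2).1; constructor 2. Qed.

Lemma sat_local sF sT {ind} : supp_local sF sT ->
  forall g (phi : formula S g) nu nu', agree_on (occF phi) nu nu' ->
  (sat (M:=mk sF sT ind) phi nu <-> sat (M:=mk sF sT ind) phi nu').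
Proof. by move=> loc g phi nu nu'; apply: (eval_transfer sF sT ind sF sT ind).2; right. Qed.

Lemma eval_irel_irrelevant {sF sT} (i1 i2 : irel) g s (t : term g s) nu :
  eval (M:=mk sF sT i1) t nu = eval (M:=mk sF sT i2) t nu.
Proof.
elim: t nu => //= [g' f ts IH | g' s' gam t1 IH1 t2 IH2 | A IHA C IHC | A IHA C IHC | A IHA] nu.
- by congr (fI _); apply: functional_extensionality_dep.
- by apply: if_informative_congr; rewrite ?IH1 ?IH2 //; apply: guard_sat_local.
- by rewrite IHA IHC.
- by rewrite IHA IHC.
- by rewrite IHA.
Qed.

Lemma sat_mono_polarity sF sT (i1 i2 : irel) : (forall r a, i1 r a -> i2 r a) ->
  forall g (phi : formula S g) p, polarity_ok p phi -> forall nu,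
  if p then sat (M:=mk sF sT i1) phi nu -> sat (M:=mk sF sT i2) phi nu
  else sat (M:=mk sF sT i2) phi nu -> sat (M:=mk sF sT i1) phi nu.
Proof.
move=> le12 g phi; have EV := @eval_irel_irrelevant sF sT i1 i2.
have G gam nu : sat (M:=mk sF sT i1) gam nu <-> sat (M:=mk sF sT i2) gam nu
  := guard_sat_local (@agree_on_refl _ _ _ nu).
have args ss g' (ts : forall i : 'I_(size ss), term g' (Some (nth (fg S) ss i))) nu :
  (fun i => eval (M:=mk sF sT i1) (ts i) nu) = (fun i => eval (M:=mk sF sT i2) (ts i) nu).
  exact: functional_extensionality_dep.
elim: phi => /= [g' s t1 t2 | g' r ts | r ts | t A | g' a IHa b IHb | g' a IHa
               | g' gam _ a IHa b IHb | g' s n gam _ a IHa] p.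
- by case: p => _ nu; rewrite !EV.
- by case: p => _ nu; rewrite args.
- by move=> -> nu; rewrite args; apply: le12.
- by case: p => _ nu; rewrite !EV.
- by move=> [Ha Hb] nu; move: (IHa p Ha nu) (IHb p Hb nu); case: p {Ha Hb}; tauto.
- by move=> Ha nu; move: (IHa (~~ p) Ha nu); case: p {Ha} => /=; tauto.
- by move=> [Ha Hb] nu; move: (IHa p Ha nu) (IHb p Hb nu) (G gam nu); case: p {Ha Hb}; tauto.
- move=> Ha nu; case: p Ha => Ha [v [hg ha]]; exists v.
    by split; [exact/G | exact: (IHa true Ha)].
  by split; [exact/G | exact: (IHa false Ha)].
Qed.

End Evaluation.

Section LeastModel.
Variable S : signature.
Variable rho : forall r : Isym S, formula S false.
Hypothesis rho_closed : forall r, def_closed r (rho r).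
Arguments rho_closed : clear implicits.
Hypothesis rho_pos : forall r, polarity_ok true (rho r).
Variable B : structure S.
Notation U := (univ B).
Notation mk sF sT ind := (@Model S B sF sT ind).

Section Monotonicity.
Context {sF1 sF2 : fsupp B} {sT1 sT2 : tsupp B} {i1 i2 : irel B}.
Arguments sT1 : clear implicits.
Arguments sT2 : clear implicits.
Hypothesis leF : forall phi nu u, sF1 phi nu u -> sF2 phi nu u.
Hypothesis leT : forall s t nu u, sT1 s t nu u -> sT2 s t nu u.

Let guard_eq (gam : formula S true) nu :
  sat (M:=mk sF1 sT1 i1) gam nu = sat (M:=mk sF2 sT2 i2) gam nu.
Proof. exact/propositional_extensionality/guard_sat_local/agree_on_refl. Qed.

Let fg_eq g b (t : term g (Some b)) nu :
  eval (M:=mk sF1 sT1 i1) t nu = eval (M:=mk sF2 sT2 i2) t nu.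
Proof. exact/fg_eval_local/agree_on_refl. Qed.

Lemma rhsF_mono g (phi : formula S g) nu u :
  rhsF (M:=mk sF1 sT1 i1) rho phi nu u -> rhsF (M:=mk sF2 sT2 i2) rho phi nu u.
Proof.
case: phi => /=; try by firstorder.
- move=> r ts.
  have -> : (fun i => eval (M:=mk sF1 sT1 i1) (ts i) nu) =
            (fun i => eval (M:=mk sF2 sT2 i2) (ts i) nu).
    by apply: functional_extensionality_dep => i; apply: fg_eq.
  by firstorder.
- move=> g' gam phi psi; rewrite guard_eq.
  by case: excluded_middle_informative => /= ?; firstorder.
- move=> g' s n gam phi [[v h] | [v [hg h]]]; [left | right]; exists v.
    exact: leF.
  by rewrite -guard_eq; split=> //; apply: leF.
Qed.

Lemma rhsT_mono g s (t : term g s) nu u :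
  rhsT (M:=mk sF1 sT1 i1) t nu u -> rhsT (M:=mk sF2 sT2 i2) t nu u.
Proof.
case: t => /=; try by firstorder.
- move=> g' f ts [[fm [i h]] | [i h]]; last by right; exists i; apply: leT.
  by left; split=> //; exists i; rewrite -fg_eq.
- move=> g' s' gam t1 t2; rewrite guard_eq.
  by case: excluded_middle_informative => /= ?; firstorder.
Qed.

End Monotonicity.

Section Transfer.
Context {sF1 sF2 : fsupp B} {sT1 sT2 : tsupp B} {ind : irel B}.
Arguments sT1 : clear implicits.
Arguments sT2 : clear implicits.
Hypothesis tr : supp_transfer sF1 sT1 sF2 sT2.

Let guard_eq (gam : formula S true) nu nu' : agree_on (occF gam) nu nu' ->
  sat (M:=mk sF1 sT1 ind) gam nu = sat (M:=mk sF2 sT2 ind) gam nu'.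
Proof. by move=> E; apply/propositional_extensionality/guard_sat_local. Qed.

Let fg_eq g b (t : term g (Some b)) nu nu' : agree_on (occT t) nu nu' ->
  eval (M:=mk sF1 sT1 ind) t nu = eval (M:=mk sF2 sT2 ind) t nu'.
Proof. exact: fg_eval_local. Qed.

Lemma rhsF_transfer g (phi : formula S g) nu nu' u :
  rhsF (M:=mk sF1 sT1 ind) rho phi nu u -> agree_on (occF (relaxF phi)) nu nu' ->
  rhsF (M:=mk sF2 sT2 ind) rho phi nu' u.
Proof.
have [trF trT] := tr.
case: phi => /=.
- by move=> g' s t1 t2 [] h E; [left | right]; apply: trT h _; agree_sub E.
- by move=> g' r ts [i h] E; exists i; apply: trT h _; apply: (agree_on_sub E) => ? ?; exists i.
- move=> r ts h E.
  have <- : (fun i => eval (M:=mk sF1 sT1 ind) (ts i) nu) =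
            (fun i => eval (M:=mk sF2 sT2 ind) (ts i) nu').
    apply: functional_extensionality_dep => i; apply: fg_eq.
    by apply: (agree_on_sub E) => ? ?; exists i.
  case: h => [h | [i h]]; [left | right; exists i].
    apply: trF h _; apply: (def_closed_agree (rho_closed r)) => i.
    by rewrite !params_upd_nth.
  by apply: trT h _; apply: (agree_on_sub E) => ? ?; exists i.
- by move=> t A [] h E; [left | right]; apply: trT h _; agree_sub E.
- by move=> g' a b [] h E; [left | right]; apply: trF h _; agree_sub E.
- by move=> g' a h E; apply: trF h _; agree_sub E.
- move=> g' gam a b [h | h] E; first by left; apply: trF h _; agree_sub E.
  right; rewrite -(@guard_eq gam nu); last by agree_sub E.
  by case: excluded_middle_informative h => /= _ h; apply: trF h _; agree_sub E.
- move=> g' s m gam a h E.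
  case: h => [[v h] | [v [hg h]]]; [left | right]; exists v.
    by apply: trF h _; apply: (agree_on_upd v E) => ? ?; rewrite occF_relax; left.
  split; last by apply: trF h _; apply: (agree_on_upd v E) => ? ?; right.
  by rewrite -(@guard_eq gam (upd nu m v)) //; apply: (agree_on_upd v E) => ? ?; left.
Qed.

Lemma rhsT_transfer g s (t : term g s) nu nu' u :
  rhsT (M:=mk sF1 sT1 ind) t nu u -> agree_on (occT (relaxT t)) nu nu' ->
  rhsT (M:=mk sF2 sT2 ind) t nu' u.
Proof.
have [trF trT] := tr.
case: t => //=.
- move=> g' f ts [[fm [i h]] | [i h]] E; [left; split=> //; exists i | right; exists i].
    rewrite -(@fg_eq _ _ (ts i) nu) //.
    by apply: (agree_on_sub E) => ? ? o; exists i; rewrite occT_relax.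
  by apply: trT h _; apply: (agree_on_sub E) => ? ?; exists i.
- move=> g' s' gam t1 t2 [h | h] E; first by left; apply: trF h _; agree_sub E.
  right; rewrite -(@guard_eq gam nu); last by agree_sub E.
  by case: excluded_middle_informative h => /= _ h; apply: trT h _; agree_sub E.
- by move=> phi h E; apply: trF h _; agree_sub E.
- by move=> s' t h E; apply: trT h _; agree_sub E.
- by move=> A C [] h E; [left | right]; apply: trT h _; agree_sub E.
- by move=> A C [] h E; [left | right]; apply: trT h _; agree_sub E.
- by move=> A h E; apply: trT h _; agree_sub E.
Qed.

End Transfer.

(* The support equation of [relaxF phi] is stated for every [phi] with that image;
   since [relaxF] is not injective, they must all have the same right-hand side. *)
Lemma rhs_relax (M : model S) :
  (forall g (phi : formula S g) nu u,
     rhsF (M:=M) rho (relaxF phi) nu u <-> rhsF (M:=M) rho phi nu u) /\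
  (forall g s (t : term g s) nu u, rhsT (M:=M) (relaxT t) nu u <-> rhsT (M:=M) t nu u).
Proof.
have [idT idF] := relax_idem S; have [evT evF] := eval_relax M.
split=> [g phi nu u | g s t nu u]; [case: phi | case: t] => //=; intros; rewrite ?idT ?idF //.
- by split=> -[i h]; exists i; rewrite ?idT in h *.
- split=> -[[fm [i h]] | [i h]].
  + by left; split=> //; exists i; rewrite ?evT in h *.
  + by right; exists i; rewrite ?idT in h *.
  + by left; split=> //; exists i; rewrite ?evT in h *.
  + by right; exists i; rewrite ?idT in h *.
Qed.

Definition ind0 : irel B := fun _ _ => False.

(* The right-hand sides do not depend on the inductive relations (see rhsF_mono), so
   the choice of [ind0] is immaterial. *)
Definition supp_closed (sF : fsupp B) (sT : tsupp B) :=
  (forall g (phi : formula S g) nu u,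
     rhsF (M:=mk sF sT ind0) rho phi nu u -> sF (relaxF phi) nu u) /\
  (forall g s (t : term g s) nu u,
     rhsT (M:=mk sF sT ind0) t nu u -> sT s (relaxT t) nu u).

Definition lfpF : fsupp B := fun phi nu u => forall sF sT, supp_closed sF sT -> sF phi nu u.
Definition lfpT : tsupp B := fun s t nu u => forall sF sT, supp_closed sF sT -> sT s t nu u.
Arguments lfpT : clear implicits.

Lemma lfp_least sF sT : supp_closed sF sT ->
  (forall phi nu u, lfpF phi nu u -> sF phi nu u) /\
  (forall s t nu u, lfpT s t nu u -> sT s t nu u).
Proof. by move=> cl; split=> [phi nu u | s t nu u] h; apply: h cl. Qed.

Lemma lfp_closed : supp_closed lfpF lfpT.
Proof.
split=> [g phi nu u | g s t nu u] h sF sT cl; have [leF leT] := lfp_least cl.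
- by apply: cl.1; apply: rhsF_mono h.
- by apply: cl.2; apply: rhsT_mono h.
Qed.

Lemma support_eqs_closed sF sT ind : support_eqs (mk sF sT ind) rho -> supp_closed sF sT.
Proof.
move=> [eqF eqT]; split=> [g phi nu u | g s t nu u] h.
- by apply/eqF; apply: rhsF_mono h.
- by apply/eqT; apply: rhsT_mono h.
Qed.

Lemma lfp_support_eqs ind : support_eqs (mk lfpF lfpT ind) rho.
Proof.
(* The part of the least closed pair justified by a right-hand side is closed. *)
pose postF : fsupp B := fun psi nu u => lfpF psi nu u /\
  forall g (phi : formula S g), relaxF phi = psi -> rhsF (M:=mk lfpF lfpT ind0) rho phi nu u.
pose postT : tsupp B := fun s t nu u => lfpT s t nu u /\
  forall g (t' : term g s), relaxT t' = t -> rhsT (M:=mk lfpF lfpT ind0) t' nu u.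
have [relF relT] := rhs_relax (mk lfpF lfpT ind0).
have post_lfpF phi nu u : postF phi nu u -> lfpF phi nu u by case.
have post_lfpT s t nu u : postT s t nu u -> lfpT s t nu u by case.
have cl : supp_closed postF postT.
  split=> [g phi nu u | g s t nu u] h.
  - have {}h : rhsF (M:=mk lfpF lfpT ind0) rho phi nu u := rhsF_mono post_lfpF post_lfpT h.
    split=> [|g' phi' E]; first exact: lfp_closed.1.
    by apply/relF; rewrite E; apply/relF.
  - have {}h : rhsT (M:=mk lfpF lfpT ind0) t nu u := rhsT_mono post_lfpF post_lfpT h.
    split=> [|g' t' E]; first exact: lfp_closed.2.
    by apply/relT; rewrite E; apply/relT.
have [leF leT] := lfp_least cl.
split=> [g phi nu u | g s t nu u] /=; split.
- by case/leF=> _ /(_ _ phi erefl); apply: rhsF_mono.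
- by move=> h; apply: lfp_closed.1; apply: rhsF_mono h.
- by case/leT=> _ /(_ _ t erefl); apply: rhsT_mono.
- by move=> h; apply: lfp_closed.2; apply: rhsT_mono h.
Qed.

Lemma lfp_local : supp_local lfpF lfpT.
Proof.
pose locF : fsupp B := fun phi nu u =>
  forall nu', agree_on (occF phi) nu nu' -> lfpF phi nu' u.
pose locT : tsupp B := fun s t nu u =>
  forall nu', agree_on (occT t) nu nu' -> lfpT s t nu' u.
have tr : supp_transfer locF locT lfpF lfpT.
  by split=> [phi | s t] nu nu' u h E; apply: h.
have cl : supp_closed locF locT.
  split=> [g phi nu u | g s t nu u] h nu' E.
  - by apply: lfp_closed.1; apply: (rhsF_transfer tr h E).
  - by apply: lfp_closed.2; apply: (rhsT_transfer tr h E).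
have [leF leT] := lfp_least cl.
by split=> [phi nu nu' u /leF h /h | s t nu nu' u /leT h /h].
Qed.

Definition ind_closed (ind : irel B) := forall r nu,
  sat (M:=mk lfpF lfpT ind) (rho r) nu -> ind r (fun i => nu (Some (nth (fg S) (iargs r) i)) i).

Definition lfpI : irel B := fun r a => forall ind, ind_closed ind -> ind r a.
Arguments lfpI : clear implicits.

Lemma lfpI_closed : ind_closed lfpI.
Proof.
move=> r nu h ind cl; apply: (cl).
exact: (sat_mono_polarity (fun r a h => h ind cl) (rho_pos r) nu h).
Qed.

Lemma lfpI_inductive_eqs : inductive_eqs (mk lfpF lfpT lfpI) rho.
Proof.
pose postI : irel B := fun r a => lfpI r a /\ forall nu : asg U,
  (forall i : 'I_(size (iargs r)), nu (Some (nth (fg S) (iargs r) i)) i = a i) ->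
  sat (M:=mk lfpF lfpT lfpI) (rho r) nu.
have cl : ind_closed postI.
  move=> r nu h.
  have {}h : sat (M:=mk lfpF lfpT lfpI) (rho r) nu :=
    sat_mono_polarity (fun r a (h : postI r a) => h.1) (rho_pos r) nu h.
  split=> [|nu' E]; first exact: lfpI_closed.
  have Eag : agree_on (occF (rho r)) nu nu'.
    by apply: (def_closed_agree (rho_closed r)) => i; rewrite E.
  exact: (sat_local (ind:=lfpI) lfp_local Eag).1 h.
move=> r nu /=; split=> [h | ]; last exact: lfpI_closed.
by have [_] := h postI cl; apply.
Qed.

Definition lfp_model : model S := mk lfpF lfpT lfpI.

Lemma lfp_frame_model : frame_model rho lfp_model.
Proof.
split; first exact: lfp_support_eqs.
split; first exact: lfpI_inductive_eqs.
split.
- move=> sF sT ind _ _ strict /support_eqs_closed /lfp_least [geF geT].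
  by case: strict => [[phi [nu [u [/geF]]]] | [s [t [nu [u [/geT]]]]]].
- move=> ind _ [r [a [h nh]]] eqs; apply: nh (h ind _).
  by move=> r' nu /(eqs r' nu).
Qed.

Lemma frame_model_lfp sF sT ind : frame_model rho (mk sF sT ind) -> mk sF sT ind = lfp_model.
Proof.
move=> [eqs [ieqs [minS minI]]].
have [geF geT] := lfp_least (support_eqs_closed eqs).
have leF phi nu u : sF phi nu u -> lfpF phi nu u.
  move=> h; apply: NNPP => nh; apply: minS geF geT _ (lfp_support_eqs ind0).
  by left; exists phi, nu, u.
have leT s t nu u : sT s t nu u -> lfpT s t nu u.
  move=> h; apply: NNPP => nh; apply: minS geF geT _ (lfp_support_eqs ind0).
  by right; exists s, t, nu, u.
have eF : sF = lfpF by apply: fsupp_ext; split; [apply: leF | apply: geF].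
have eT : sT = lfpT by apply: tsupp_ext; split; [apply: leT | apply: geT].
subst sF sT.
have cl : ind_closed ind := fun r nu h => (ieqs r nu).2 h.
have leI r a : ind r a -> lfpI r a.
  move=> h; apply: NNPP => nh; apply: (minI lfpI (fun r a h => h ind cl) _ lfpI_inductive_eqs).
  by exists r, a.
have eI : ind = lfpI by apply: irel_ext; split; [apply: leI | apply; apply: cl].
by rewrite eI.
Qed.

End LeastModel.

Theorem proposition1 (S : signature) (rho : forall r : Isym S, formula S false)
  (rho_closed : forall r, def_closed r (rho r))
  (rho_pos : forall r, polarity_ok true (rho r))
  (M : model S) :
  exists! M' : model S, mbase M' = mbase M /\ frame_model rho M'.
Proof.
exists (lfp_model rho (mbase M)); split.
  by split; last exact: lfp_frame_model.
move=> [B sF sT ind] /= [eB fm]; subst B.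
by rewrite (frame_model_lfp rho_closed rho_pos fm).
Qed.
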